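(* Under the standing assumptions, if $R$ is a Hirata separable extension of $R^\beta$, or if $R$ is a central $\beta$-Galois algebra (i.e. $R^\beta=C(R)$), then the Galois map $\theta:H\mapsto R^{\beta_H}$ from the set of wide subgroupoids of $\mathcal G$ to the set of subalgebras of $R$ containing $R^\beta$ is injective.
   Context: All rings and algebras are associative and unital. A groupoid is a nonempty set $\mathcal G$ with a partially defined associative multiplication in which every $g$ has an inverse $g^{-1}$, a left identity $r(g)=gg^{-1}$ and a right identity $d(g)=g^{-1}g$; $gh$ is defined iff $d(g)=r(h)$; $\mathcal G_0$ is the set of identities. A subgroupoid is a nonempty subset closed under inverses and defined products; it is wide if it contains $\mathcal G_0$. Standing assumptions: $K$ commutative ring, $R$ a $K$-algebra, $\mathcal G$ a finite groupoid, $\beta=(\{E_g\},\{\beta_g\})$ a unital action of $\mathcal G$ on $R$: $E_g=E_{r(g)}$ is an ideal of $R$, unital with identity $1_g$ (so $1_{g^{-1}}=1_{d(g)}$), $\beta_g:E_{g^{-1}}\to E_g$ a $K$-algebra isomorphism, $\beta_e=\mathrm{id}_{E_e}$ for $e\in\mathcal G_0$, $\beta_g\beta_h(x)=\beta_{gh}(x)$ whenever $d(g)=r(h)$, $x\in E_{h^{-1}}$; $R=\bigoplus_{e\in\mathcal G_0}E_e$; and $R$ is a $\beta$-Galois extension of $R^\beta$: there exist $x_i,y_i\in R$ ($1\le i\le m$) with $\sum_i x_i\beta_g(y_i1_{g^{-1}})=1_g$ if $g\in\mathcal G_0$ and $=0$ otherwise. For a subgroupoid $H$, $R^{\beta_H}=\{r\in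 R:\beta_h(r1_{h^{-1}})=r1_h\ \forall h\in H\}$, $R^\beta=R^{\beta_{\mathcal G}}$. $C(R)$ is the center of $R$. A ring extension $R\supseteq S$ is Hirata separable if $R\otimes_S R$ is isomorphic, as an $R$-$R$-bimodule, to a direct summand of a finite direct sum of copies of $R$. *)

From HB Require Import structures.
From mathcomp Require Import all_boot all_order all_algebra.

Set Implicit Arguments.
Unset Strict Implicit.
Unset Printing Implicit Defensive.

Import GRing.Theory.
Local Open Scope ring_scope.

(* Finite groupoids.  The partial product is modelled by a total       *)
(* function [mul] on a finite type, only meaningful on composable      *)
(* pairs (d g = r h).                                                  *)

Section Groupoid.
Variables (G : finType) (mul : G -> G -> G) (inv : G -> G).

Definition gr (g : G) : G := mul g (inv g).
Definition gd (g : G) : G := mul (inv g) g.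

Definition is_groupoid : Prop :=
  ((inhabited G) /\ (involutive inv) /\ ((forall g h l, gd g = gr h -> gd h = gr l ->
         mul (mul g h) l = mul g (mul h l))) /\ ((forall g h, gd g = gr h -> gr (mul g h) = gr g /\ gd (mul g h) = gd h)) /\ ((forall g, mul (gr g) g = g)) /\ ((forall g, mul g (gd g) = g))).

Definition gidents : {set G} := [set e | [exists g, e == gd g]].

Definition subgroupoid (H : {set G}) : Prop :=
  ((H != set0) /\ ((forall h, h \in H -> inv h \in H)) /\ ((forall g h, g \in H -> h \in H -> gd g = gr h -> mul g h \in H))).

Definition wide_subgroupoid (H : {set G}) : Prop :=
  subgroupoid H /\ gidents \subset H.

End Groupoid.

Section Action.
Variables (K : comPzRingType) (R : algType K).

Definition is_ideal (I : R -> Prop) : Prop :=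
  ((I 0) /\ ((forall x y, I x -> I y -> I (x + y))) /\ ((forall x, I x -> I (- x))) /\ ((forall a x, I x -> I (a * x) /\ I (x * a)))).

Definition unital_with (I : R -> Prop) (u : R) : Prop :=
  I u /\ (forall x, I x -> u * x = x /\ x * u = x).

(* f is a K-algebra isomorphism from the ideal A onto the ideal B
   (as non-unital-presented algebras; preservation of identities follows) *)
Definition alg_iso_on (A B : R -> Prop) (f : R -> R) : Prop :=
  (((forall x, A x -> B (f x))) /\ ((forall x y, A x -> A y -> f (x + y) = f x + f y)) /\ ((forall x y, A x -> A y -> f (x * y) = f x * f y)) /\ ((forall (k : K) x, A x -> f (k *: x) = k *: f x)) /\ ((forall x y, A x -> A y -> f x = f y -> x = y)) /\ ((forall y, B y -> exists2 x, A x & f x = y))).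

Variables (G : finType) (mul : G -> G -> G) (inv : G -> G).

(* beta = ({E_g}, {beta_g}) is a unital action of G on R, with
   1_g the identity of E_g, and R = \bigoplus_{e in G_0} E_e *)
Definition unital_action (E : G -> R -> Prop) (one : G -> R)
    (beta : G -> R -> R) : Prop :=
  (((forall g x, E g x <-> E (gr mul inv g) x)) /\ ((forall g, is_ideal (E g))) /\ ((forall g, unital_with (E g) (one g))) /\ ((forall g, alg_iso_on (E (inv g)) (E g) (beta g))) /\ ((forall e x, e \in gidents mul inv -> E e x -> beta e x = x)) /\ ((forall g h x, gd mul inv g = gr mul inv h -> E (inv h) x ->
          beta g (beta h x) = beta (mul g h) x)) /\ ((forall x : R, exists f : G -> R,
          (forall e, e \in gidents mul inv -> E e (f e)) /\
          x = \sum_(e in gidents mul inv) f e)) /\ ((forall f : G -> R,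
          (forall e, e \in gidents mul inv -> E e (f e)) ->
          \sum_(e in gidents mul inv) f e = 0 ->
          forall e, e \in gidents mul inv -> f e = 0))).

Definition fixed_sub (one : G -> R) (beta : G -> R -> R) (H : {set G})
    (r : R) : Prop :=
  forall h, h \in H -> beta h (r * one (inv h)) = r * one h.

Definition fixed_ring (one : G -> R) (beta : G -> R -> R) (r : R) : Prop :=
  fixed_sub one beta [set: G] r.

Definition beta_galois (one : G -> R) (beta : G -> R -> R) : Prop :=
  exists m (xs ys : 'I_m -> R),
    forall g : G,
      \sum_(i < m) xs i * beta g (ys i * one (inv g)) =
      (if g \in gidents mul inv then one g else 0).

End Action.

(* An element of R (x)_S R is represented by a finite list of pairs
   (a_j, b_j) standing for sum_j a_j (x) b_j.  Two representatives are
   equal in R (x)_S R iff every S-balanced biadditive map into an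
   abelian group takes the same value on them (universal property of
   the tensor product). *)

Section Tensor.
Variable (R : nzRingType) (S : R -> Prop).

Definition balanced (M : zmodType) (f : R -> R -> M) : Prop :=
  (((forall a a' b, f (a + a') b = f a b + f a' b)) /\ ((forall a b b', f a (b + b') = f a b + f a b')) /\ ((forall a s b, S s -> f (a * s) b = f a (s * b)))).

Definition tens_eval (M : zmodType) (f : R -> R -> M) (t : seq (R * R)) : M :=
  \sum_(p <- t) f p.1 p.2.

Definition tens_eq (t t' : seq (R * R)) : Prop :=
  forall (M : zmodType) (f : R -> R -> M), balanced f ->
    tens_eval f t = tens_eval f t'.

Definition tens_lmul (r : R) (t : seq (R * R)) : seq (R * R) :=
  [seq (r * p.1, p.2) | p <- t].
Definition tens_rmul (t : seq (R * R)) (r : R) : seq (R * R) :=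
  [seq (p.1, p.2 * r) | p <- t].

(* R (x)_S R is isomorphic, as an R-R-bimodule, to a direct summand of
   R^n for some n; i.e. there are R-R-bimodule maps
   phi : R (x)_S R -> R^n and psi : R^n -> R (x)_S R with psi o phi = id.
   phi is given by the S-balanced map (a,b) |-> phi a b with
   phi (r a) b = r phi a b, phi a (b r) = phi a b r (componentwise). *)
Definition hirata_separable : Prop :=
  exists n (phi : R -> R -> 'I_n -> R) (psi : ('I_n -> R) -> seq (R * R)),
    (((forall i, balanced (fun a b => phi a b i))) /\ ((forall r a b i, phi (r * a) b i = r * phi a b i)) /\ ((forall r a b i, phi a (b * r) i = phi a b i * r)) /\ ((forall x y, tens_eq (psi (fun i => x i + y i)) (psi x ++ psi y))) /\ ((forall r x, tens_eq (psi (fun i => r * x i)) (tens_lmul r (psi x)))) /\ ((forall r x, tens_eq (psi (fun i => x i * r)) (tens_rmul (psi x) r))) /\ ((forall a b, tens_eq (psi (phi a b)) [:: (a, b)]))).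

End Tensor.

From Pilot Require Import Defs.
From HB Require Import structures.
From mathcomp Require Import all_boot all_order all_algebra.

Set Implicit Arguments.
Unset Strict Implicit.
Unset Printing Implicit Defensive.
Import GRing.Theory.
Local Open Scope ring_scope.

(* Injectivity of the Galois map holds for every
   beta-Galois extension whose identities 1_g are nonzero.
   For a wide subgroupoid H consider the trace
       tr_H(w) = sum_{h in H} beta_h (w 1_{h^-1}),
   which always lies in R^{beta_H}.  If g fixes every element of
   R^{beta_H}, then with Galois coordinates (x_i, y_i)
       sum_i x_i beta_g (tr_H(y_i) 1_{g^-1}) = sum_i x_i tr_H(y_i) 1_g.
   Expanding both traces, the left side is sum over h in H, r(h) = d(g)
   of [gh in G_0] 1_{gh}, which vanishes unless g in H, while the right
   side equals 1_{r(g)} = 1_g <> 0.  Hence H = {g | g fixes R^{beta_H}},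
   so H is determined by R^{beta_H}. *)

Section Groupoid.
Variables (G : finType) (mul : G -> G -> G) (inv : G -> G).
Hypothesis HG : is_groupoid mul inv.
Local Notation gr := (gr mul inv).
Local Notation gd := (gd mul inv).

Lemma invK : involutive inv.
Proof. by case: HG => _ []. Qed.

Lemma mulA g h l :
  gd g = gr h -> gd h = gr l -> mul (mul g h) l = mul g (mul h l).
Proof. by case: HG => _ [_ [H _]]; apply: H. Qed.

Lemma gr_gd_mul g h : gd g = gr h -> gr (mul g h) = gr g /\ gd (mul g h) = gd h.
Proof. by case: HG => _ [_ [_ [H _]]]; apply: H. Qed.

Lemma mul_gr g : mul (gr g) g = g.
Proof. by case: HG => _ [_ [_ [_ [H _]]]]. Qed.

Lemma mul_gd g : mul g (gd g) = g.
Proof. by case: HG => _ [_ [_ [_ [_ H]]]]. Qed.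

Lemma gr_inv g : gr (inv g) = gd g.
Proof. by rewrite /Defs.gr /Defs.gd invK. Qed.

Lemma gd_inv g : gd (inv g) = gr g.
Proof. by rewrite /Defs.gr /Defs.gd invK. Qed.

Lemma gr_gr g : gr (gr g) = gr g.
Proof. by have [-> _] := gr_gd_mul (esym (gr_inv g)). Qed.

Lemma gr_gd g : gr (gd g) = gd g.
Proof. by rewrite -gr_inv gr_gr. Qed.

Lemma gr_ident e : e \in gidents mul inv -> gr e = e.
Proof. by rewrite inE => /existsP [g /eqP ->]; rewrite gr_gd. Qed.

Lemma gd_ident g : gd g \in gidents mul inv.
Proof. by rewrite inE; apply/existsP; exists g. Qed.

Lemma gr_ident_in g : gr g \in gidents mul inv.
Proof. by rewrite -gd_inv gd_ident. Qed.

(* Left translation by k and by k^-1 are mutually inverse; this is the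
   reindexing behind the invariance of the trace. *)
Lemma mulKg k h : gr h = gd k -> mul (inv k) (mul k h) = h.
Proof.
move=> e; rewrite -mulA; first by rewrite -/(Defs.gd mul inv k) -e mul_gr.
  by rewrite gd_inv.
by rewrite e.
Qed.

Lemma mulKVg k h : gr h = gr k -> mul k (mul (inv k) h) = h.
Proof.
move=> e; rewrite -mulA; first by rewrite -/(Defs.gr mul inv k) -e mul_gr.
  by rewrite gr_inv.
by rewrite gd_inv.
Qed.

Section WideSubgroupoid.
Variable H : {set G}.
Hypothesis HH : wide_subgroupoid mul inv H.

Lemma sub_inv h : h \in H -> inv h \in H.
Proof. by case: HH => [[_ [Hi _]] _]; apply: Hi. Qed.

Lemma sub_mul g h : g \in H -> h \in H -> gd g = gr h -> mul g h \in H.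
Proof. by case: HH => [[_ [_ Hm]] _]; apply: Hm. Qed.

Lemma sub_ident e : e \in gidents mul inv -> e \in H.
Proof. by case: HH => _ /subsetP; apply. Qed.

Lemma sub_divr g h : h \in H -> gd g = gr h -> mul g h \in H -> g \in H.
Proof.
move=> hH dgrh ghH.
have -> : g = mul (mul g h) (inv h).
  rewrite mulA //; last by rewrite gr_inv.
  by rewrite -/(Defs.gr mul inv h) -dgrh mul_gd.
apply: sub_mul => //; first exact: sub_inv.
by have [_ ->] := gr_gd_mul dgrh; rewrite gr_inv.
Qed.

End WideSubgroupoid.
End Groupoid.

Section Action.
Variables (K : comPzRingType) (R : algType K)
  (G : finType) (mul : G -> G -> G) (inv : G -> G)
  (E : G -> R -> Prop) (one : G -> R) (beta : G -> R -> R).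
Hypothesis HG : is_groupoid mul inv.
Hypothesis HA : unital_action mul inv E one beta.
Local Notation gr := (gr mul inv).
Local Notation gd := (gd mul inv).
Local Notation G0 := (gidents mul inv).

Lemma ideal_gr g x : E g x <-> E (gr g) x.
Proof. by case: HA => H _; apply: H. Qed.

Lemma ideal0 g : E g 0.
Proof. by case: HA => _ [H _]; case: (H g). Qed.

Lemma idealN g x : E g x -> E g (- x).
Proof. by case: HA => _ [H _]; case: (H g) => _ [_ [H3 _]]; apply: H3. Qed.

Lemma idealD g x y : E g x -> E g y -> E g (x + y).
Proof. by case: HA => _ [H _]; case: (H g) => _ [H2 _]; apply: H2. Qed.

Lemma idealM g a x : E g x -> E g (a * x) /\ E g (x * a).
Proof. by case: HA => _ [H _]; case: (H g) => _ [_ [_ H4]]; apply: H4. Qed.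

Lemma one_ideal g : E g (one g).
Proof. by case: HA => _ [_ [H _]]; case: (H g). Qed.

Lemma one_unit g x : E g x -> one g * x = x /\ x * one g = x.
Proof. by case: HA => _ [_ [H _]]; case: (H g) => _; apply. Qed.

Lemma beta_ideal g x : E (inv g) x -> E g (beta g x).
Proof. by case: HA => _ [_ [_ [H _]]]; case: (H g) => H1 _; apply: H1. Qed.

Lemma betaD g x y :
  E (inv g) x -> E (inv g) y -> beta g (x + y) = beta g x + beta g y.
Proof. by case: HA => _ [_ [_ [H _]]]; case: (H g) => _ [H1 _]; apply: H1. Qed.

Lemma betaM_comp g h x :
  gd g = gr h -> E (inv h) x -> beta g (beta h x) = beta (mul g h) x.
Proof. by case: HA => _ [_ [_ [_ [_ [H _]]]]]; apply: H. Qed.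

Lemma sum_ideals_direct (f : G -> R) : (forall e, e \in G0 -> E e (f e)) ->
  \sum_(e in G0) f e = 0 -> forall e, e \in G0 -> f e = 0.
Proof. by case: HA => _ [_ [_ [_ [_ [_ [_ H]]]]]]; apply: H. Qed.

Lemma ideal_eq g h x : gr g = gr h -> E g x -> E h x.
Proof. by move=> e Ex; apply/(ideal_gr h x); rewrite -e; apply/(ideal_gr g x). Qed.

Lemma one_gr g : one (gr g) = one g.
Proof.
have h1 : E g (one (gr g)) by apply/(ideal_gr g); apply: one_ideal.
have h2 : E (gr g) (one g) by apply/(ideal_gr g); apply: one_ideal.
have [e1 _] := one_unit h2.
have [_ e2] := one_unit h1.
by rewrite -e1 -{1}e2.
Qed.

Lemma one_inv g : one (inv g) = one (gd g).
Proof. by rewrite -one_gr (gr_inv HG). Qed.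

Lemma one_inv_mul k h : gd k = gr h -> one (inv (mul k h)) = one (inv h).
Proof. by move=> e; rewrite !one_inv; have [_ ->] := gr_gd_mul HG e. Qed.

Lemma ideals_disjoint e e' x :
  e \in G0 -> e' \in G0 -> e != e' -> E e x -> E e' x -> x = 0.
Proof.
move=> eG e'G ne Ex Ex'.
pose f c := if c == e then x else if c == e' then - x else 0.
have Hf c : c \in G0 -> E c (f c).
  move=> _; rewrite /f; case: eqP => [->//|_].
  by case: eqP => [->|_]; [exact: idealN | exact: ideal0].
have := sum_ideals_direct Hf _ eG; rewrite /f eqxx; apply.
rewrite (bigD1 e) //= (bigD1 e') /=; last by rewrite e'G eq_sym.
rewrite eqxx eq_sym (negbTE ne) eqxx.
by rewrite big1 ?addr0 ?subrr // => c /andP [/andP [_ /negbTE ->] /negbTE ->].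
Qed.

Lemma mul_one_ideal h j a :
  E h a -> a * one j = if gr h == gr j then a else 0.
Proof.
move=> Ea; case: eqP => [e|ne].
  by have [_ ->] := one_unit (ideal_eq e Ea).
apply: (@ideals_disjoint (gr h) (gr j)); rewrite ?(gr_ident_in HG) //.
- by apply/eqP.
- by apply/(ideal_gr h); case: (idealM (one j) Ea).
- by apply/(ideal_gr j); case: (idealM a (one_ideal j)).
Qed.

Lemma beta0 k : beta k 0 = 0.
Proof.
have := @betaD k 0 0 (ideal0 (inv k)) (ideal0 (inv k)); rewrite addr0 => h.
by apply: (addrI (beta k 0)); rewrite addr0 -h.
Qed.

Lemma beta_sum k (I : finType) (P : pred I) (F : I -> R) :
  (forall i, P i -> E (inv k) (F i)) ->
  beta k (\sum_(i | P i) F i) = \sum_(i | P i) beta k (F i).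
Proof.
move=> HF.
suff [] : E (inv k) (\sum_(i | P i) F i) /\
          \sum_(i | P i) beta k (F i) = beta k (\sum_(i | P i) F i) by [].
apply: (big_rec2 (fun y1 y2 => E (inv k) y2 /\ y1 = beta k y2)).
  by split; [exact: ideal0 | rewrite beta0].
move=> i y1 y2 Pi [Ey2 ->]; split; first by apply: idealD => //; apply: HF.
by rewrite betaD //; apply: HF.
Qed.

Lemma beta_term_ideal h w : E h (beta h (w * one (inv h))).
Proof. by apply: beta_ideal; case: (idealM w (one_ideal (inv h))). Qed.

Section Trace.
Variable H : {set G}.
Hypothesis HH : wide_subgroupoid mul inv H.

Definition trace (w : R) : R := \sum_(h in H) beta h (w * one (inv h)).

Lemma trace_mul_one k w :
  trace w * one k = \sum_(h in H | gr h == gr k) beta h (w * one (inv h)).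
Proof.
rewrite /trace mulr_suml big_mkcondr /=; apply: eq_bigr => h _.
by rewrite (mul_one_ideal _ (beta_term_ideal h w)).
Qed.

Lemma beta_trace k w : beta k (trace w * one (inv k)) =
  \sum_(h in H | gr h == gd k) beta (mul k h) (w * one (inv h)).
Proof.
rewrite /trace mulr_suml big_mkcondr /=.
rewrite (eq_bigr (fun h => if gr h == gd k then beta h (w * one (inv h)) else 0));
  last by move=> h _; rewrite (mul_one_ideal _ (beta_term_ideal h w)) (gr_inv HG).
rewrite beta_sum; last first.
  move=> h _; case: eqP => [e|_]; last exact: ideal0.
  by apply: (ideal_eq _ (beta_term_ideal h w)); rewrite e (gr_inv HG).
apply: eq_bigr => h _; case: eqP => [e|_]; last exact: beta0.
by rewrite betaM_comp //; case: (idealM w (one_ideal (inv h))).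
Qed.

Lemma trace_fixed w : fixed_sub inv one beta H (trace w).
Proof.
move=> k kH; rewrite beta_trace trace_mul_one.
rewrite [RHS](reindex_onto (mul k) (mul (inv k))) /=; last first.
  by move=> h /andP [_ /eqP e]; apply: (mulKVg HG).
apply: eq_big => h; last by case/andP=> _ /eqP e; rewrite one_inv_mul.
apply/idP/idP.
  case/andP=> hH /eqP e; have [e1 _] := gr_gd_mul HG (esym e).
  by rewrite (sub_mul HH kH hH (esym e)) e1 eqxx (mulKg HG e) eqxx.
case/andP=> /andP [khH /eqP e1] /eqP <-.
have c : gd (inv k) = gr (mul k h) by rewrite (gd_inv HG) e1.
rewrite (sub_mul HH (sub_inv HH kH) khH c) /=.
by have [-> _] := gr_gd_mul HG c; rewrite (gr_inv HG).
Qed.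

Lemma fixer_in_subgroupoid g :
  beta_galois mul inv one beta -> one g != 0 ->
  (forall x, fixed_sub inv one beta H x -> beta g (x * one (inv g)) = x * one g) ->
  g \in H.
Proof.
move=> [m [xs [ys Hgal]]] nz Hfix; apply: contraT => gH.
have : \sum_(i < m) xs i * beta g (trace (ys i) * one (inv g)) =
       \sum_(i < m) xs i * (trace (ys i) * one g).
  by apply: eq_bigr => i _; rewrite Hfix //; apply: trace_fixed.
under eq_bigr do rewrite beta_trace mulr_sumr.
under [RHS]eq_bigr do rewrite trace_mul_one mulr_sumr.
rewrite exchange_big [RHS]exchange_big /=.
have lhs0 : \sum_(h in H | gr h == gd g)
    \sum_(i < m) xs i * beta (mul g h) (ys i * one (inv h)) = 0.
  apply: big1 => h /andP [hH /eqP e].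
  under eq_bigr do rewrite -(one_inv_mul (esym e)).
  rewrite Hgal; case: ifP => // gid.
  by rewrite (sub_divr HG HH hH (esym e) (sub_ident HH gid)) in gH.
rewrite lhs0 (eq_bigr (fun h => if h \in G0 then one h else 0));
  last by move=> h _; rewrite Hgal.
rewrite (bigD1 (gr g)) /=;
  last by rewrite (sub_ident HH) ?(gr_ident_in HG) // (gr_gr HG) eqxx.
rewrite (gr_ident_in HG) one_gr big1 ?addr0; first by move=> e; rewrite -e eqxx in nz.
move=> h /andP [/andP [_ /eqP e] ne]; case: ifP => // hid.
by rewrite -e (gr_ident HG hid) eqxx in ne.
Qed.

End Trace.
End Action.

Theorem theorem3p5
  (K : comPzRingType) (R : algType K)
  (G : finType) (mul : G -> G -> G) (inv : G -> G)
  (E : G -> R -> Prop) (one : G -> R) (beta : G -> R -> R) :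
  is_groupoid mul inv ->
  unital_action mul inv E one beta ->
  (forall g, one g != 0) ->
  beta_galois mul inv one beta ->
  (hirata_separable (fixed_ring inv one beta) \/
   (forall x : R, fixed_ring inv one beta x <-> (forall y : R, x * y = y * x))) ->
  forall H1 H2 : {set G},
    wide_subgroupoid mul inv H1 -> wide_subgroupoid mul inv H2 ->
    (forall x : R, fixed_sub inv one beta H1 x <-> fixed_sub inv one beta H2 x) ->
    H1 = H2.
Proof.
move=> HG HA nz Hgal _ H1 H2 W1 W2 Hfix12.
(* Each H_i is the set of elements fixing R^{beta_{H_i}}, and these
   fixed rings coincide. *)
apply/eqP; rewrite eqEsubset; apply/andP; split; apply/subsetP => g gH.
- by apply: (fixer_in_subgroupoid HG HA W2) => // x /Hfix12 /(_ g gH).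
- by apply: (fixer_in_subgroupoid HG HA W1) => // x /Hfix12 /(_ g gH).
Qed.
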